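(* Let $m,n\ge 1$, $k\ge 2$ and $P\in\mathbb{R}[x_1,\ldots,x_n]$. There is exactly one polynomial $P_0\in V_{m,k}$ such that $P-P_0$ has a zero of multiplicity at least $k$ at every point of $mB^n\setminus\{\mathbf 0\}$ and a zero of multiplicity at least $k-1$ at $\mathbf 0$. This polynomial satisfies $\deg P_0\le \deg P$.
   Context: $mB^n=\{0,1,\ldots,m\}^n$. A polynomial $f$ has a zero of multiplicity at least $k$ at $\mathbf a$ if all partial derivatives of $f$ of order less than $k$ vanish at $\mathbf a$. For an integer $k\ge 2$, a polynomial $P\in\mathbb{R}[x_1,\ldots,x_n]$ is called $(m,k)$-reduced if two conditions hold: $\deg P\le mn+(m+1)(k-1)-1$, and no monomial of $P$ is divisible by $x_{i_1}^{m+1}\cdots x_{i_k}^{m+1}$ for any indices $i_1,\ldots,i_k$ (not necessarily distinct). $V_{m,k}$ is the space of all $(m,k)$-reduced polynomials. *)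

From HB Require Import structures.
From mathcomp Require Import all_boot all_order all_algebra.
From mathcomp Require Import mpoly.
From mathcomp Require Import Rstruct.
From Stdlib Require Reals.

Set Implicit Arguments.
Unset Strict Implicit.
Unset Printing Implicit Defensive.

Import Order.TTheory GRing.Theory Num.Theory.
Local Open Scope ring_scope.

Notation RR := Rdefinitions.R.

Definition zero_mult_ge (n : nat) (f : {mpoly RR[n]}) (a : 'I_n -> RR) (k : nat) : Prop :=
  forall mu : 'X_{1..n}, (mdeg mu < k)%N -> (f^`M[mu]).@[a] = 0.

(* The points of m B^n = {0,...,m}^n, as integer vectors. *)
Definition in_mBn (n m : nat) (c : 'I_n -> nat) : Prop := forall i, (c i <= m)%N.

Definition real_pt (n : nat) (c : 'I_n -> nat) : 'I_n -> RR := fun i => (c i)%:R.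

(* The monomial x_{i_1}^{m+1} ... x_{i_k}^{m+1} (indices not necessarily
   distinct) divides the monomial mu. *)
Definition bigmon_divides (n m k : nat) (s : k.-tuple 'I_n) (mu : 'X_{1..n}) : Prop :=
  forall i : 'I_n, ((m.+1) * count_mem i s <= mu i)%N.

(* (m,k)-reduced polynomials.  deg P <= mn + (m+1)(k-1) - 1 is expressed via
   msize P = 1 + deg P (msize 0 = 0, i.e. deg 0 = -oo). *)
Definition reduced (n m k : nat) (P : {mpoly RR[n]}) : Prop :=
  (msize P <= m * n + m.+1 * k.-1)%N /\
  forall mu : 'X_{1..n}, mu \in msupp P ->
    forall s : k.-tuple 'I_n, ~ bigmon_divides m s mu.

Definition vanish_cond (n m k : nat) (Q : {mpoly RR[n]}) : Prop :=
  (forall c : 'I_n -> nat, in_mBn m c -> (exists i, c i <> 0%N) ->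
     zero_mult_ge Q (real_pt c) k) /\
  zero_mult_ge Q (fun _ => 0) k.-1.

From HB Require Import structures.
From mathcomp Require Import all_boot all_order all_algebra.
From mathcomp Require Import mpoly.
From mathcomp Require Import Rstruct.
From mathcomp Require Import ring zify.
From Stdlib Require Reals.

Set Implicit Arguments.
Unset Strict Implicit.
Unset Printing Implicit Defensive.

Import Order.TTheory GRing.Theory Num.Theory.
Local Open Scope ring_scope.

(* Let g(t) = t (t - 1) ... (t - m) and f(t) = g(t) / t.  Expanding every
   x_i^e in base g(x_i) writes P = sum_q g(x)^q R_q, with g(x)^q the product of
   the g(x_i)^(q_i) and every R_q of degree at most m in each variable; the term
   g(x)^q R_q vanishes to order |q| = sum_i q_i on the grid.  Hence
     P0 = sum_{|q| < k} g(x)^q (R_q - c_q F),   F = prod_i f(x_i),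
   where c_q is the coefficient of (x_1 ... x_n)^m in R_q when |q| = k - 1 and
   0 otherwise, differs from P by terms with the required zeros: F vanishes at
   the grid points other than 0, and at 0 order k - 1 suffices.  A degree count
   shows that P0 is (m,k)-reduced.
   Conversely let Z be reduced with these zeros.  Reducedness kills R_q for
   |q| >= k, and by induction on |q| < k the q-th derivative of Z at a grid
   point is a nonzero multiple of the value of R_q there.  A polynomial of
   degree at most m in each variable vanishing on the grid is 0, and one
   vanishing off the origin is a multiple of F, whose top coefficient c_q = 0
   then forces R_q = 0 also when |q| = k - 1. *)

Lemma mcoeff_sum_neq0 (R : nzRingType) n (I : eqType) (s : seq I) (P : pred I)
    (F : I -> {mpoly R[n]}) r :
  (\sum_(i <- s | P i) F i)@_r != 0 -> exists2 i, i \in s & P i && ((F i)@_r != 0).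
Proof.
rewrite linear_sum => nz; apply/hasP; apply: contraNT nz => /hasPn F0.
rewrite big_seq_cond big1 // => i /andP [i_in P_i].
by move: (F0 i i_in); rewrite P_i /= negbK => /eqP.
Qed.

Lemma msize_le (R : nzRingType) n (P : {mpoly R[n]}) d :
  (forall r, P@_r != 0 -> (mdeg r < d)%N) -> (msize P <= d)%N.
Proof.
move=> lt_d; rewrite msizeE; apply/bigmax_leqP_seq => r r_in _.
by apply: lt_d; rewrite -mcoeff_msupp.
Qed.

Section VarPoly.
Variables (R : comNzRingType) (n : nat).
Implicit Types (p : {poly R}) (i j : 'I_n).

Definition var_poly i : {poly R} -> {mpoly R[n]} := horner_alg 'X_i.
HB.instance Definition _ i := GRing.LRMorphism.on (var_poly i).

Lemma var_polyC i c : var_poly i c%:P = c%:MP.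
Proof. by rewrite /var_poly horner_algC alg_mpolyC. Qed.

Lemma var_polyX i : var_poly i 'X = 'X_i.
Proof. exact: horner_algX. Qed.

Lemma var_polyXn i e : var_poly i 'X^e = 'X_i ^+ e.
Proof. by rewrite rmorphXn /= var_polyX. Qed.

Lemma var_polyMXaddC i p c : var_poly i (p * 'X + c%:P) = var_poly i p * 'X_i + c%:MP.
Proof. by rewrite rmorphD rmorphM /= var_polyX var_polyC. Qed.

Lemma meval_var_poly i p a : (var_poly i p).@[a] = p.[a i].
Proof.
elim/poly_ind: p => [|p c IHp]; first by rewrite rmorph0 meval0 horner0.
by rewrite var_polyMXaddC mevalD mevalM mevalXU mevalC IHp hornerMXaddC.
Qed.

Lemma mderivXU i j : ('X_i : {mpoly R[n]})^`M(j) = (i == j)%:R.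
Proof.
rewrite mderivX mnm1E; case: eqP => [->|_]; last by rewrite scale0r.
have -> : (U_(j) - U_(j))%MM = 0%MM by apply/mnmP => l; rewrite mnmBE subnn mnm0E.
by rewrite mpolyX0 scale1r.
Qed.

Lemma mderiv_var_poly i j p :
  (var_poly i p)^`M(j) = if i == j then var_poly i p^`() else 0.
Proof.
elim/poly_ind: p => [|p c IHp]; first by rewrite deriv0 !rmorph0 mderiv0; case: eqP.
rewrite var_polyMXaddC mderivD mderivC addr0 mderivM IHp mderivXU derivMXaddC.
case: eqP => _; last by rewrite mul0r mulr0 add0r.
by rewrite mulr1 rmorphD rmorphM /= var_polyX addrC.
Qed.

Lemma mpolyX_prod_var_poly (r : 'X_{1..n}) :
  'X_[r] = \prod_i var_poly i 'X^(r i).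
Proof. by rewrite mpolyXE_id; apply: eq_bigr => i _; rewrite var_polyXn. Qed.

Lemma mnm_sum_scaleU N (t : {ffun 'I_n -> 'I_N}) j :
  (\sum_i U_(i) *+ t i)%MM j = t j.
Proof.
rewrite mnm_sumE (bigD1 j) //= big1 => [|l /negPf hl]; last by rewrite mulmnE mnm1E hl.
by rewrite mulmnE mnm1E eqxx mul1n addn0.
Qed.

Lemma mcoeff_prod_var_poly (p : 'I_n -> {poly R}) (r : 'X_{1..n}) :
  (\prod_i var_poly i (p i))@_r = \prod_i (p i)`_(r i).
Proof.
pose N := (\sum_i size (p i) + mdeg r).+1.
have size_p i : (size (p i) <= N)%N.
  have : (size (p i) <= \sum_i size (p i))%N by rewrite (bigD1 i) //= leq_addr.
  rewrite /N; lia.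
have r_lt i : (r i < N)%N.
  have : (r i <= mdeg r)%N by rewrite mdegE (bigD1 i) //= leq_addr.
  rewrite /N; lia.
have var_polyE i : var_poly i (p i) = \sum_(l < N) (p i)`_l *: 'X_[U_(i) *+ l].
  have {1}-> : p i = \sum_(l < N) (p i)`_l *: 'X^l.
    rewrite -poly_def; apply/polyP => l; rewrite coef_poly; case: ltnP => // hl.
    by rewrite nth_default // (leq_trans (size_p i) hl).
  by rewrite linear_sum; apply: eq_bigr => l _; rewrite linearZ /= mulr_algl var_polyXn mpolyXn.
rewrite (eq_bigr _ (fun i _ => var_polyE i)) bigA_distr_bigA /= linear_sum /=.
pose t0 : {ffun 'I_n -> 'I_N} := [ffun i => Ordinal (r_lt i)].
have mcoeff_term (t : {ffun 'I_n -> 'I_N}) :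
    (\prod_i ((p i)`_(t i) *: ('X_[U_(i) *+ t i] : {mpoly R[n]})))@_r =
    (\prod_i (p i)`_(t i)) * ((\sum_i U_(i) *+ t i)%MM == r)%:R.
  rewrite (eq_bigr (fun i => ((p i)`_(t i))%:MP * 'X_[U_(i) *+ t i])); last first.
    by move=> i _; rewrite mul_mpolyC.
  by rewrite big_split /= -rmorph_prod mprodXE mul_mpolyC mcoeffZ mcoeffX.
rewrite (bigD1 t0) //= [X in _ + X]big1 ?addr0 => [|t t_neq].
  rewrite mcoeff_term; have -> : (\sum_i U_(i) *+ t0 i)%MM = r.
    by apply/mnmP => j; rewrite mnm_sum_scaleU ffunE.
  by rewrite eqxx mulr1; apply: eq_bigr => i _; rewrite ffunE.
rewrite mcoeff_term; case: eqP => [t_r|]; last by rewrite mulr0.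
case/eqP: t_neq; apply/ffunP => i; apply/val_inj.
by rewrite ffunE /= -t_r mnm_sum_scaleU.
Qed.

End VarPoly.

Lemma mnm_ind n (P : 'X_{1..n} -> Prop) :
  P 0%MM -> (forall nu j, P nu -> P (U_(j) + nu)%MM) -> forall nu, P nu.
Proof.
move=> P0 PS nu; have [d] := ubnP (mdeg nu); elim: d nu => // d IHd nu.
have [-> _ //|nu_neq0] := eqVneq nu 0%MM.
have [j nu_j] : exists j, (0 < nu j)%N.
  apply/existsP; apply: contraTT nu_neq0 => /existsPn nu0; rewrite negbK.
  by apply/eqP/mnmP => i; rewrite mnm0E; apply/eqP; rewrite -leqn0 leqNgt nu0.
have nuE : nu = (U_(j) + (nu - U_(j)))%MM.
  by apply/mnmP => i; rewrite mnmDE mnmBE mnm1E; case: eqP => [<-|]; lia.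
rewrite nuE mdegD mdeg1 ltnS => /IHd; exact: PS.
Qed.

Section PowProd.
Variables (R : comNzRingType) (n : nat) (phi : 'I_n -> {poly R}).
Implicit Types (e : 'I_n -> nat) (i j : 'I_n) (W : {mpoly R[n]}).

Definition pow_prod e : {mpoly R[n]} := \prod_i var_poly i (phi i ^+ e i).

Lemma eq_pow_prod e e' : e =1 e' -> pow_prod e = pow_prod e'.
Proof. by move=> ee'; apply: eq_bigr => i _; rewrite ee'. Qed.

Lemma mderiv_prod_var_poly (p : 'I_n -> {poly R}) j :
  (\prod_i var_poly i (p i))^`M(j) =
    var_poly j (p j)^`() * \prod_(i | i != j) var_poly i (p i).
Proof.
rewrite (bigD1 j) //= mderivM mderiv_var_poly eqxx.
suff -> : (\prod_(i | i != j) var_poly i (p i))^`M(j) = 0 by rewrite mulr0 addr0.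
elim/big_ind: _ => [|x y dx dy|i /negPf ij]; first by rewrite mderivC.
- by rewrite mderivM dx dy mul0r mulr0 addr0.
- by rewrite mderiv_var_poly ij.
Qed.

Lemma mderiv_pow_prod e j :
  (pow_prod e)^`M(j) =
    pow_prod (fun i => e i - (i == j))%N * var_poly j (phi j)^`() *+ e j.
Proof.
rewrite mderiv_prod_var_poly /pow_prod [in RHS](bigD1 j) //= eqxx /= subn1 deriv_exp.
rewrite [in RHS](eq_bigr (fun i => var_poly i (phi i ^+ e i))) => [|i /negPf ->].
  by rewrite rmorphMn rmorphM /= mulrnAl; congr (_ *+ _); ring.
by rewrite subn0.
Qed.

Lemma mderiv_pow_prod_mul e W j :
  (pow_prod e * W)^`M(j) =
    pow_prod (fun i => e i - (i == j))%N * (var_poly j (phi j)^`() * W *+ e j)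
    + pow_prod e * W^`M(j).
Proof. by rewrite mderivM mderiv_pow_prod mulrnAl mulrnAr mulrA. Qed.

Variable a : 'I_n -> R.

Lemma meval_pow_prod e : (pow_prod e).@[a] = \prod_i (phi i).[a i] ^+ e i.
Proof.
rewrite /pow_prod (big_morph _ (mevalM a) (meval1 a)).
by apply: eq_bigr => i _; rewrite meval_var_poly horner_exp.
Qed.

Hypothesis phi_root : forall i, (phi i).[a i] = 0.

Lemma meval_mderivm_pow_prod_mul_eq0 (nu : 'X_{1..n}) e W :
  (exists i, (nu i < e i)%N) -> ((pow_prod e * W)^`M[nu]).@[a] = 0.
Proof.
elim/mnm_ind: nu e W => [|nu j IHnu] e W [i nu_lt].
  rewrite mderivm0m mevalM meval_pow_prod (bigD1 i) //= phi_root expr0n.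
  by rewrite mnm0E in nu_lt; rewrite eqn0Ngt nu_lt !mul0r.
rewrite mderivmDm mderivmU1m mderiv_pow_prod_mul mderivmD mevalD.
rewrite mnmDE mnm1E eq_sym in nu_lt.
by rewrite !IHnu ?addr0 //; exists i; case: eqP nu_lt => _ /=; lia.
Qed.

Lemma meval_mderivm_pow_prod_mul (nu : 'X_{1..n}) W :
  ((pow_prod (fun i => nu i) * W)^`M[nu]).@[a] =
    (\prod_i ((nu i)`!%:R * (phi i)^`().[a i] ^+ nu i)) * W.@[a].
Proof.
elim/mnm_ind: nu W => [|nu j IHnu] W.
  by rewrite mderivm0m mevalM meval_pow_prod !big1 ?mul1r // => i _;
    rewrite mnm0E expr0 ?mulr1.
rewrite mderivmDm mderivmU1m mderiv_pow_prod_mul mderivmD mevalD.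
rewrite [X in _ + X]meval_mderivm_pow_prod_mul_eq0 ?addr0; last first.
  by exists j; rewrite mnmDE mnm1E eqxx; lia.
rewrite (eq_pow_prod (e' := fun i => nu i)) => [|i]; last first.
  by rewrite mnmDE mnm1E eq_sym; case: eqP => _ /=; lia.
rewrite IHnu mevalMn !mevalM meval_var_poly.
rewrite [in RHS](bigD1 j) //= [in LHS](bigD1 j) //= mnmDE mnm1E eqxx add1n.
rewrite [in RHS](eq_bigr (fun i => (nu i)`!%:R * (phi i)^`().[a i] ^+ nu i)) => [|i /negPf].
  by rewrite factS natrM exprS -mulr_natr; ring.
by rewrite mnmDE mnm1E eq_sym => ->.
Qed.

End PowProd.

(** * The grid polynomials g and f *)

Section GridPoly.
Variables (R : numFieldType) (m : nat).

Definition grid_poly : {poly R} := \prod_(b <- iota 0 m.+1) ('X - b%:R%:P).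
Definition pgrid_poly : {poly R} := \prod_(b <- iota 1 m) ('X - b%:R%:P).

Lemma grid_polyE : grid_poly = 'X * pgrid_poly.
Proof. by rewrite /grid_poly /= big_cons subr0. Qed.

Lemma size_grid_poly : size grid_poly = m.+2.
Proof. by rewrite size_prod_XsubC size_iota. Qed.

Lemma grid_poly_neq0 : grid_poly != 0.
Proof. by rewrite -size_poly_eq0 size_grid_poly. Qed.

Lemma size_pgrid_poly : size pgrid_poly = m.+1.
Proof. by rewrite size_prod_XsubC size_iota. Qed.

Lemma lead_coef_pgrid_poly : pgrid_poly`_m = 1.
Proof.
have /monicP := monic_prod_XsubC (iota 1 m) predT (fun b => b%:R : R).
by rewrite lead_coefE size_pgrid_poly.
Qed.

Lemma root_grid_poly b : (b <= m)%N -> grid_poly.[b%:R] = 0.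
Proof.
move=> le_bm; have b_in : b \in iota 0 m.+1 by rewrite mem_iota; lia.
by rewrite horner_prod (bigD1_seq b b_in (iota_uniq _ _)) /= hornerXsubC subrr mul0r.
Qed.

Lemma root_pgrid_poly b : (0 < b <= m)%N -> pgrid_poly.[b%:R] = 0.
Proof.
move=> b_range; have b_in : b \in iota 1 m by rewrite mem_iota; lia.
by rewrite horner_prod (bigD1_seq b b_in (iota_uniq _ _)) /= hornerXsubC subrr mul0r.
Qed.

Lemma pgrid_poly0_neq0 : pgrid_poly.[0] != 0.
Proof.
rewrite horner_prod prodf_seq_neq0; apply/allP => b; rewrite mem_iota => b_range.
by rewrite /= hornerXsubC sub0r oppr_eq0 pnatr_eq0 -lt0n; case/andP: b_range.
Qed.

Lemma deriv_grid_poly_neq0 b : (b <= m)%N -> grid_poly^`().[b%:R] != 0.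
Proof.
move=> le_bm; have b_in : b \in iota 0 m.+1 by rewrite mem_iota; lia.
rewrite /grid_poly (bigD1_seq b b_in (iota_uniq _ _)) /= derivM derivXsubC mul1r.
rewrite hornerD hornerM hornerXsubC subrr mul0r addr0 horner_prod prodf_seq_neq0.
by apply/allP => c _; apply/implyP => cb; rewrite hornerXsubC subr_eq0 eqr_nat eq_sym.
Qed.

End GridPoly.

(** * Expansion in powers of g *)

Section GridAdic.
Variables (R : numFieldType) (m : nat).
Local Notation g := (grid_poly R m).
Implicit Types (p : {poly R}).

Definition gquot p l := iter l (fun d => d %/ g) p.
Definition gdigit p l := gquot p l %% g.

Lemma grid_adic_expansion L p :
  p = \sum_(l < L) g ^+ l * gdigit p l + g ^+ L * gquot p L.
Proof.
elim: L => [|L IHL]; first by rewrite big_ord0 add0r expr0 mul1r.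
rewrite big_ord_recr /= {1}IHL -addrA; congr (_ + _).
by rewrite /gdigit {1}(divp_eq (gquot p L) g) /= exprSr; ring.
Qed.

Lemma size_gquot p l : size (gquot p l) = (size p - m.+1 * l)%N.
Proof.
elim: l => [|l IHl]; first by rewrite muln0 subn0.
by rewrite /gquot iterS -/(gquot p l) size_divp ?grid_poly_neq0 // IHl size_grid_poly; lia.
Qed.

Lemma coef_gdigit_neq0 p l r :
  (gdigit p l)`_r != 0 -> (r <= m)%N /\ (m.+1 * l + r < size p)%N.
Proof.
move=> nz; have lt_r : (r < size (gdigit p l))%N.
  by rewrite ltnNge; apply: contra nz => ?; rewrite nth_default.
have := ltn_modp (gquot p l) g; rewrite grid_poly_neq0 size_grid_poly.
have := leq_modp (gquot p l) g; rewrite size_gquot.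
rewrite /gdigit in lt_r; lia.
Qed.

Lemma grid_adic_expansionXn e L : (e < L)%N ->
  'X^e = \sum_(l < L) g ^+ l * gdigit 'X^e l.
Proof.
move=> lt_eL; rewrite {1}(grid_adic_expansion L 'X^e).
suff -> : gquot 'X^e L = 0 by rewrite mulr0 addr0.
by apply/eqP; rewrite -size_poly_eq0 size_gquot size_polyXn; nia.
Qed.

End GridAdic.

Section MultiGridAdic.
Variables (R : numFieldType) (n m : nat).
Local Notation g := (grid_poly R m).

Definition gweight B (q : {ffun 'I_n -> 'I_B}) := (\sum_i (q i : nat))%N.

Definition gpow B (q : {ffun 'I_n -> 'I_B}) : {mpoly R[n]} :=
  pow_prod (fun=> g) (fun i => q i).

Definition gcoef B (P : {mpoly R[n]}) (q : {ffun 'I_n -> 'I_B}) : {mpoly R[n]} :=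
  \sum_(mu <- msupp P) P@_mu *: \prod_i var_poly i (gdigit m 'X^(mu i) (q i)).

Lemma grid_adic_mexpansion (P : {mpoly R[n]}) B : (msize P <= B)%N ->
  P = \sum_(q : {ffun 'I_n -> 'I_B}) gpow q * gcoef P q.
Proof.
move=> le_PB.
have mpolyXE mu : mu \in msupp P -> 'X_[mu] =
    \sum_(q : {ffun 'I_n -> 'I_B}) gpow q * \prod_i var_poly i (gdigit m 'X^(mu i) (q i)).
  move=> mu_in; rewrite mpolyX_prod_var_poly.
  have lt_muB i : (mu i < B)%N.
    apply: leq_trans le_PB; apply: leq_ltn_trans (msize_mdeg_lt mu_in).
    by rewrite mdegE (bigD1 i) //= leq_addr.
  rewrite (eq_bigr (fun i => \sum_(l < B) var_poly i (g ^+ l) * var_poly i (gdigit m 'X^(mu i) l))).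
    by rewrite bigA_distr_bigA /=; apply: eq_bigr => q _; rewrite big_split.
  move=> i _; rewrite {1}(@grid_adic_expansionXn R m _ _ (lt_muB i)) rmorph_sum /=.
  by apply: eq_bigr => l _; rewrite rmorphM.
rewrite {1}(mpolyE P) (eq_big_seq _ (fun mu mu_in => congr1 _ (mpolyXE mu mu_in))) /=.
under [RHS]eq_bigr => q _ do rewrite mulr_sumr.
rewrite exchange_big /=; apply: eq_bigr => mu _; rewrite scaler_sumr.
by apply: eq_bigr => q _; rewrite scalerAr.
Qed.

Lemma mcoeff_gpow_neq0 B (q : {ffun 'I_n -> 'I_B}) r :
  (gpow q)@_r != 0 -> forall i, (r i <= m.+1 * q i)%N.
Proof.
rewrite mcoeff_prod_var_poly => /prodf_neq0 nz i; apply: contraTT (nz i isT).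
rewrite -ltnNge negbK => lt_r; rewrite nth_default //.
have := size_exp (grid_poly R m) (q i); rewrite size_grid_poly /=.
case: (size _) => [|s] /= ->; lia.
Qed.

Lemma mcoeff_gcoef_neq0 (P : {mpoly R[n]}) B (q : {ffun 'I_n -> 'I_B}) r :
  (gcoef P q)@_r != 0 -> exists2 mu, mu \in msupp P &
    forall i, (r i <= m)%N /\ (m.+1 * q i + r i <= mu i)%N.
Proof.
move=> /mcoeff_sum_neq0 [mu mu_in] /=.
rewrite mcoeffZ mcoeff_prod_var_poly mulf_eq0 negb_or => /andP [_ /prodf_neq0 nz_i].
by exists mu => // i; have := coef_gdigit_neq0 (nz_i i isT); rewrite size_polyXn; lia.
Qed.

End MultiGridAdic.

Arguments gpow {R n} m {B} q.

(** * Polynomials of degree at most m in each variable *)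

Section GridInterpolation.
Variables (R : numFieldType) (n m : nat).

Definition boxed (P : {mpoly R[n]}) := forall r, P@_r != 0 -> forall i, (r i <= m)%N.

Definition grid_pt (c : {ffun 'I_n -> 'I_m.+1}) : 'I_n -> R := fun i => (c i : nat)%:R.

Definition grid_origin : {ffun 'I_n -> 'I_m.+1} := [ffun=> ord0].

Local Notation node := (fun b : nat => b%:R : R).

Lemma node_inj : injective node.
Proof. by move=> a b /eqP; rewrite eqr_nat => /eqP. Qed.

Lemma boxed_interpolation (P : {mpoly R[n]}) : boxed P ->
  P = \sum_(c : {ffun 'I_n -> 'I_m.+1})
        P.@[grid_pt c] *: \prod_i var_poly i (tnth (lagrange m.+1 node) (c i)).
Proof.
move=> boxed_P.
have mpolyXE r : r \in msupp P -> 'X_[r] = \sum_(c : {ffun 'I_n -> 'I_m.+1})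
    ('X_[r] : {mpoly R[n]}).@[grid_pt c] *:
      \prod_i var_poly i (tnth (lagrange m.+1 node) (c i)).
  rewrite mcoeff_msupp => /boxed_P le_rm; rewrite {1}mpolyX_prod_var_poly.
  rewrite (eq_bigr (fun i => \sum_(b < m.+1)
      (node b ^+ r i) *: var_poly i (tnth (lagrange m.+1 node) b))).
    by rewrite bigA_distr_bigA /=; apply: eq_bigr => c _; rewrite scaler_prod mevalX.
  move=> i _; rewrite {1}(lagrange_gen (ltn0Sn m) node_inj (p := 'X^(r i))).
    rewrite rmorph_sum; apply: eq_bigr => b _.
    by rewrite rmorphM /= var_polyC mul_mpolyC hornerXn.
  by rewrite size_polyXn ltnS.
rewrite {1}(mpolyE P) (eq_big_seq _ (fun r r_in => congr1 _ (mpolyXE r r_in))) /=.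
under eq_bigr => r _ do rewrite scaler_sumr.
rewrite exchange_big /=; apply: eq_bigr => c _.
by rewrite mevalE scaler_suml; apply: eq_bigr => r _; rewrite scalerA mevalX.
Qed.

Lemma boxed_eq0 (P : {mpoly R[n]}) :
  boxed P -> (forall c, P.@[grid_pt c] = 0) -> P = 0.
Proof.
move=> boxed_P P0; rewrite (boxed_interpolation boxed_P) big1 // => c _.
by rewrite P0 scale0r.
Qed.

Lemma boxedB (P Q : {mpoly R[n]}) : boxed P -> boxed Q -> boxed (P - Q).
Proof.
move=> bP bQ r; rewrite mcoeffB; have [->|/bP //] := eqVneq P@_r 0.
by rewrite sub0r oppr_eq0 => /bQ.
Qed.

Lemma boxedZ c (P : {mpoly R[n]}) : boxed P -> boxed (c *: P).
Proof. by move=> bP r; rewrite mcoeffZ mulf_eq0 negb_or => /andP [_ /bP]. Qed.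

Lemma grid_origin_neq c : c != grid_origin -> exists i, (0 < c i)%N.
Proof.
move=> c_neq0; apply/existsP; apply: contraTT c_neq0 => /existsPn c0; rewrite negbK.
apply/eqP/ffunP => i; rewrite ffunE; apply/val_inj => /=.
by apply/eqP; rewrite -leqn0 leqNgt c0.
Qed.

Definition pgrid_mpoly : {mpoly R[n]} := \prod_i var_poly i (pgrid_poly R m).

Lemma boxed_pgrid_mpoly : boxed pgrid_mpoly.
Proof.
move=> r; rewrite mcoeff_prod_var_poly => /prodf_neq0 nz i.
by apply: contraTT (nz i isT); rewrite -ltnNge negbK => lt_mr; rewrite nth_default ?size_pgrid_poly.
Qed.

Lemma mcoeff_pgrid_mpoly_top : pgrid_mpoly@_[multinom m | i < n] = 1.
Proof.
by rewrite mcoeff_prod_var_poly big1 // => i _; rewrite mnmE lead_coef_pgrid_poly.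
Qed.

Lemma meval_pgrid_mpoly c : pgrid_mpoly.@[grid_pt c] = \prod_i (pgrid_poly R m).[(c i : nat)%:R].
Proof.
by rewrite (big_morph _ (mevalM _) (meval1 _)); apply: eq_bigr => i _; rewrite meval_var_poly.
Qed.

Lemma meval_pgrid_mpoly_eq0 c : c != grid_origin -> pgrid_mpoly.@[grid_pt c] = 0.
Proof.
move=> /grid_origin_neq [i ci_gt0].
rewrite meval_pgrid_mpoly (bigD1 i) //= root_pgrid_poly ?mul0r //.
by rewrite ci_gt0 -ltnS ltn_ord.
Qed.

Lemma meval_pgrid_mpoly_origin : pgrid_mpoly.@[grid_pt grid_origin] != 0.
Proof.
by rewrite meval_pgrid_mpoly; apply/prodf_neq0 => i _; rewrite ffunE pgrid_poly0_neq0.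
Qed.

Lemma boxed_punctured_eq (P : {mpoly R[n]}) : boxed P ->
  (forall c, c != grid_origin -> P.@[grid_pt c] = 0) ->
  P = (P.@[grid_pt grid_origin] / pgrid_mpoly.@[grid_pt grid_origin]) *: pgrid_mpoly.
Proof.
move=> boxed_P P0; apply/eqP; rewrite -subr_eq0; apply/eqP; apply: boxed_eq0.
  exact/boxedB/boxedZ/boxed_pgrid_mpoly.
move=> c; rewrite mevalB mevalZ; have [->|c_neq0] := eqVneq c grid_origin.
  by rewrite divfK ?subrr // meval_pgrid_mpoly_origin.
by rewrite P0 // (meval_pgrid_mpoly_eq0 c_neq0) mulr0 subrr.
Qed.

End GridInterpolation.

Arguments grid_pt {R n m} c.
Arguments grid_origin {n m}.
Arguments pgrid_mpoly {R n} m.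

Section Counting.
Variable n : nat.

Lemma sum_count_mem (s : seq 'I_n) : (\sum_i count_mem i s)%N = size s.
Proof.
elim: s => [|x s IHs]; first by rewrite big1.
rewrite /= big_split /= IHs (bigD1 x) //= eqxx big1 // => i.
by rewrite eq_sym => /negPf ->.
Qed.

Lemma tuple_count_mem_le (k : nat) (c : 'I_n -> nat) : (k <= \sum_i c i)%N ->
  exists s : k.-tuple 'I_n, forall i, (count_mem i s <= c i)%N.
Proof.
elim: k => [|k IHk] le_k; first by exists [tuple] => i.
have [s le_s] := IHk (ltnW le_k).
have [i lt_i] : exists i, (count_mem i s < c i)%N.
  apply/existsP; move: le_k; apply: contraLR => /existsPn ge_s.
  rewrite -leqNgt -(size_tuple s) -sum_count_mem; apply: leq_sum => i _.
  by rewrite leqNgt ge_s.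
exists [tuple of i :: s] => j /=.
by case: eqP => [<-|_]; rewrite ?add1n ?add0n //; apply: le_s.
Qed.

Lemma sum_lt_of_le (e f : 'I_n -> nat) j :
  (forall i, e i <= f i)%N -> (e j < f j)%N -> (\sum_i e i < \sum_i f i)%N.
Proof.
move=> le_ef lt_j; rewrite (bigD1 j) // [X in (_ < X)%N](bigD1 j) //= -addSn.
by rewrite leq_add //; apply: leq_sum => i _.
Qed.

Lemma exists_lt_of_sum_le (e f : 'I_n -> nat) j :
  (\sum_i e i <= \sum_i f i)%N -> e j != f j -> exists i, (e i < f i)%N.
Proof.
move=> le_sum neq_j; apply/existsP; apply: contraLR le_sum => /existsPn ge_ef.
have le_fe i : (f i <= e i)%N by rewrite leqNgt ge_ef.
by rewrite -ltnNge (sum_lt_of_le (j := j)) // ltn_neqAle eq_sym neq_j le_fe.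
Qed.

Lemma exists_lt_of_sum_lt (e f : 'I_n -> nat) :
  (\sum_i e i < \sum_i f i)%N -> exists i, (e i < f i)%N.
Proof.
move=> lt_sum; apply/existsP; move: lt_sum; apply: contraLR => /existsPn ge_ef.
by rewrite -leqNgt; apply: leq_sum => i _; rewrite leqNgt ge_ef.
Qed.

Lemma mdeg_le_boxed m (r : 'X_{1..n}) : (forall i, r i <= m)%N -> (mdeg r <= m * n)%N.
Proof.
move=> le_rm; rewrite mdegE (@leq_trans (\sum_(i < n) m)) ?leq_sum //.
by rewrite sum_nat_const card_ord mulnC.
Qed.

Lemma mdeg_lt_boxed m (r : 'X_{1..n}) :
  (forall i, r i <= m)%N -> r != [multinom m | i < n] -> (mdeg r < m * n)%N.
Proof.
move=> le_rm r_neq; have [j rj_neq] : exists j, r j != m.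
  apply/existsP; apply: contraTT r_neq => /existsPn r_top; rewrite negbK.
  by apply/eqP/mnmP => i; rewrite mnmE; apply/eqP; rewrite -[_ == _]negbK r_top.
rewrite mdegE (@leq_trans (\sum_(i < n) m)) //.
  by apply: (sum_lt_of_le (j := j)) => //; rewrite ltn_neqAle rj_neq le_rm.
by rewrite sum_nat_const card_ord mulnC.
Qed.

End Counting.

Section ZeroMultiplicity.
Variable n : nat.
Implicit Types (f g : {mpoly RR[n]}) (a : 'I_n -> RR) (K : nat).

Lemma zero_mult_ge0 a K : zero_mult_ge (0 : {mpoly RR[n]}) a K.
Proof. by move=> mu _; rewrite raddf0 meval0. Qed.

Lemma zero_mult_geD f g a K :
  zero_mult_ge f a K -> zero_mult_ge g a K -> zero_mult_ge (f + g) a K.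
Proof. by move=> zf zg mu lt_mu; rewrite mderivmD mevalD zf ?zg ?addr0. Qed.

Lemma zero_mult_geB f g a K :
  zero_mult_ge f a K -> zero_mult_ge g a K -> zero_mult_ge (f - g) a K.
Proof. by move=> zf zg mu lt_mu; rewrite mderivmB mevalB zf ?zg ?subrr. Qed.

Lemma zero_mult_geZ c f a K : zero_mult_ge f a K -> zero_mult_ge (c *: f) a K.
Proof. by move=> zf mu lt_mu; rewrite mderivmZ mevalZ zf ?mulr0. Qed.

Lemma zero_mult_ge_sum (I : Type) (r : seq I) (P : pred I) (F : I -> {mpoly RR[n]}) a K :
  (forall i, P i -> zero_mult_ge (F i) a K) -> zero_mult_ge (\sum_(i <- r | P i) F i) a K.
Proof.
by move=> zF; elim/big_ind: _ => [|f g|i /zF]; [apply: zero_mult_ge0 | apply: zero_mult_geD |].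
Qed.

Lemma vanish_condB m k f g :
  vanish_cond m k f -> vanish_cond m k g -> vanish_cond m k (f - g).
Proof.
move=> [zf zf0] [zg zg0]; split; last exact: zero_mult_geB.
by move=> c c_in c_neq0; apply: zero_mult_geB; [apply: zf | apply: zg].
Qed.

Lemma reducedB m k f g : reduced m k f -> reduced m k g -> reduced m k (f - g).
Proof.
move=> [size_f red_f] [size_g red_g]; split.
  by rewrite (leq_trans (msizeD_le _ _)) // msizeN geq_max size_f size_g.
by move=> mu /msuppB_le; rewrite mem_cat => /orP [/red_f|/red_g].
Qed.

End ZeroMultiplicity.

Section GridVanishing.
Variables (n m : nat).
Local Notation g := (grid_poly RR m).
Local Notation f := (pgrid_poly RR m).
Implicit Types (e : 'I_n -> nat) (a : 'I_n -> RR) (K : nat).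

Lemma zero_mult_ge_gpow_mul e (W : {mpoly RR[n]}) a K :
  (forall i, g.[a i] = 0) -> (K <= \sum_i e i)%N ->
  zero_mult_ge (pow_prod (fun=> g) e * W) a K.
Proof.
move=> g_root le_K mu lt_mu; apply: meval_mderivm_pow_prod_mul_eq0 => //.
by apply: exists_lt_of_sum_lt; rewrite -mdegE (leq_trans lt_mu).
Qed.

(* Regroup g(x)^e F as f(x_l)^(e_l + 1) prod_{i <> l} g(x_i)^(e_i) times
   x_l^(e_l) prod_{i <> l} f(x_i): each factor of the first product vanishes
   at a, and their exponents add up to one more than those of g(x)^e. *)
Lemma zero_mult_ge_gpow_pgrid e a K l :
  (forall i, g.[a i] = 0) -> f.[a l] = 0 -> (K <= (\sum_i e i).+1)%N ->
  zero_mult_ge (pow_prod (fun=> g) e * pgrid_mpoly m) a K.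
Proof.
move=> g_root f_root le_K.
pose phi i := if i == l then f else g.
pose e' i := if i == l then (e i).+1 else e i.
pose w i := if i == l then 'X^(e i) else f.
have -> : pow_prod (fun=> g) e * pgrid_mpoly m = pow_prod phi e' * \prod_i var_poly i (w i).
  rewrite /pow_prod /pgrid_mpoly -!big_split; apply: eq_bigr => i _ /=.
  rewrite -!rmorphM /phi /e' /w; case: eqP => _ //.
  by rewrite grid_polyE exprMn exprSr; congr (var_poly _ _); ring.
move=> mu lt_mu; apply: meval_mderivm_pow_prod_mul_eq0.
  by move=> i; rewrite /phi; case: eqP => [->|].
apply: exists_lt_of_sum_lt; rewrite -mdegE (leq_trans lt_mu) // (leq_trans le_K) //.
rewrite (bigD1 l) //= [X in (_ <= X)%N](bigD1 l) //= /e' eqxx addSn ltnS leq_add2l.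
by apply: leq_sum => i /negPf ->.
Qed.

End GridVanishing.

(** * Existence *)

Section Reduction.
Variables (n m k : nat).
Local Notation top := [multinom m | i < n].
Implicit Types (P : {mpoly RR[n]}).

Definition top_coef B P (q : {ffun 'I_n -> 'I_B}) : RR :=
  if gweight q == k.-1 then (gcoef m P q)@_top else 0.

Definition rcoef B P (q : {ffun 'I_n -> 'I_B}) : {mpoly RR[n]} :=
  gcoef m P q - top_coef P q *: pgrid_mpoly m.

Definition reduce P : {mpoly RR[n]} :=
  \sum_(q : {ffun 'I_n -> 'I_(msize P)} | (gweight q < k)%N) gpow m q * rcoef P q.

Lemma mcoeff_rcoef_neq0 B P (q : {ffun 'I_n -> 'I_B}) r : (rcoef P q)@_r != 0 ->
  [/\ forall i, (r i <= m)%N,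
      exists2 mu, mu \in msupp P & forall i, (m.+1 * q i + r i <= mu i)%N
    & gweight q = k.-1 -> r != top].
Proof.
rewrite /rcoef /top_coef mcoeffB mcoeffZ.
case: ifP => [/eqP w_eq|/eqP w_neq]; last first.
  rewrite mul0r subr0 => /mcoeff_gcoef_neq0 [mu mu_in le_mu].
  split=> [i||/w_neq //]; first by case: (le_mu i).
  by exists mu => // i; case: (le_mu i).
have [->|r_neq] := eqVneq r top; first by rewrite mcoeff_pgrid_mpoly_top mulr1 subrr eqxx.
have [r_coef0|/mcoeff_gcoef_neq0 [mu mu_in le_mu] _] := eqVneq (gcoef m P q)@_r 0; last first.
  split=> [i||//]; first by case: (le_mu i).
  by exists mu => // i; case: (le_mu i).
rewrite r_coef0 sub0r oppr_eq0 mulf_eq0 negb_or => /andP [/mcoeff_gcoef_neq0 [mu mu_in le_mu]].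
move=> /boxed_pgrid_mpoly le_rm; split => //; exists mu => // i.
by case: (le_mu i); rewrite mnmE; have := le_rm i; lia.
Qed.

Lemma mcoeff_reduce_neq0 P r : (reduce P)@_r != 0 ->
  exists q : {ffun 'I_n -> 'I_(msize P)}, exists r1 r2,
    [/\ (gweight q < k)%N, r = (r1 + r2)%MM, forall i, (r1 i <= m.+1 * q i)%N
      & (rcoef P q)@_r2 != 0].
Proof.
move=> /mcoeff_sum_neq0 [q _ /andP [w_lt]].
rewrite -mcoeff_msupp => /msuppM_le /allpairsP [[r1 r2] /= [r1_in r2_in ->]].
rewrite !mcoeff_msupp in r1_in r2_in.
by exists q, r1, r2; split => //; apply: mcoeff_gpow_neq0 r1_in.
Qed.

Lemma msize_reduce P : (msize (reduce P) <= msize P)%N.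
Proof.
apply: msize_le => r /mcoeff_reduce_neq0 [q [r1 [r2 [_ -> le_r1 /mcoeff_rcoef_neq0]]]].
case=> _ [mu mu_in le_mu] _; apply: leq_ltn_trans (msize_mdeg_lt mu_in).
rewrite mdegD !mdegE -big_split /=; apply: leq_sum => i _.
by have := le_r1 i; have := le_mu i; lia.
Qed.

Lemma reduce_reduced P : reduced m k (reduce P).
Proof.
split.
  apply: msize_le => r /mcoeff_reduce_neq0 [q [r1 [r2 [w_lt -> le_r1]]]].
  case/mcoeff_rcoef_neq0 => boxed_r2 _ r2_top; rewrite mdegD.
  have le_mdeg_r1 : (mdeg r1 <= m.+1 * gweight q)%N.
    by rewrite mdegE /gweight big_distrr /=; apply: leq_sum.
  have [w_eq|w_neq] := eqVneq (gweight q) k.-1.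
    have := mdeg_lt_boxed boxed_r2 (r2_top w_eq); rewrite w_eq in le_mdeg_r1; lia.
  have : (m.+1 * gweight q <= m.+1 * k.-2)%N by rewrite leq_mul2l; apply/orP; right; lia.
  have := mdeg_le_boxed boxed_r2; have -> : k.-1 = k.-2.+1 by lia.
  rewrite mulnS; lia.
move=> r; rewrite mcoeff_msupp => /mcoeff_reduce_neq0.
case=> q [r1 [r2 [w_lt r_eq le_r1 /mcoeff_rcoef_neq0 [boxed_r2 _ _]]]] s s_div.
have le_count i : (count_mem i s <= q i)%N.
  rewrite -ltnS -(ltn_pmul2l (ltn0Sn m)) mulnS.
  have := s_div i; rewrite r_eq mnmDE; have := le_r1 i; have := boxed_r2 i; lia.
have : (\sum_i count_mem i s <= gweight q)%N by apply: leq_sum => i _.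
by rewrite sum_count_mem size_tuple; lia.
Qed.

Lemma sub_reduce P : P - reduce P =
  \sum_(q : {ffun 'I_n -> 'I_(msize P)} | ~~ (gweight q < k)%N) gpow m q * gcoef m P q +
  \sum_(q : {ffun 'I_n -> 'I_(msize P)} | (gweight q < k)%N)
     top_coef P q *: (gpow m q * pgrid_mpoly m).
Proof.
rewrite {1}(grid_adic_mexpansion m (leqnn (msize P))).
rewrite (bigID (fun q => gweight q < k)%N) /= addrC -addrA; congr (_ + _).
rewrite /reduce -sumrB; apply: eq_bigr => q _.
by rewrite /rcoef mulrBr subKr scalerAr.
Qed.

Lemma vanish_cond_sub_reduce P : vanish_cond m k (P - reduce P).
Proof.
rewrite sub_reduce; split => [c c_in [l cl_neq0]|].
  have g_root (i : 'I_n) : (grid_poly RR m).[real_pt c i] = 0 by apply: root_grid_poly.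
  apply: zero_mult_geD; apply: zero_mult_ge_sum => q w_q.
    by apply: zero_mult_ge_gpow_mul; rewrite // leqNgt.
  rewrite /top_coef; case: eqP => [w_eq|_]; last by rewrite scale0r; apply: zero_mult_ge0.
  apply/zero_mult_geZ/(zero_mult_ge_gpow_pgrid (l := l)) => //.
    by apply: root_pgrid_poly; have := c_in l; lia.
  by rewrite -/(gweight q) w_eq; lia.
have g_root (i : 'I_n) : (grid_poly RR m).[0] = 0 by apply: (root_grid_poly _ (leq0n m)).
apply: zero_mult_geD; apply: zero_mult_ge_sum => q w_q.
  by apply: zero_mult_ge_gpow_mul; rewrite // -/(gweight q); lia.
rewrite /top_coef; case: eqP => [w_eq|_]; last by rewrite scale0r; apply: zero_mult_ge0.
by apply/zero_mult_geZ/zero_mult_ge_gpow_mul; rewrite // -/(gweight q) w_eq.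
Qed.

End Reduction.

(** * Uniqueness *)

Section Uniqueness.
Variables (n m k : nat) (Z : {mpoly RR[n]}).
Hypotheses (Z_reduced : reduced m k Z) (Z_vanish : vanish_cond m k Z).
Local Notation B := (msize Z).
Local Notation top := [multinom m | i < n].
Local Notation g := (grid_poly RR m).

Lemma gcoef_heavy_eq0 (q : {ffun 'I_n -> 'I_B}) : (k <= gweight q)%N -> gcoef m Z q = 0.
Proof.
move=> w_ge; apply/mpolyP => r; rewrite mcoeff0; apply/eqP; apply: contraT.
case/mcoeff_gcoef_neq0 => mu mu_in le_mu.
have [s le_s] := tuple_count_mem_le (c := fun i => q i) w_ge.
case: (Z_reduced.2 mu mu_in s) => i; case: (le_mu i) => _; apply: leq_trans.
by rewrite (leq_trans _ (leq_addr _ _)) // leq_mul2l le_s orbT.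
Qed.

Lemma top_gcoef_eq0 (q : {ffun 'I_n -> 'I_B}) : gweight q = k.-1 -> (gcoef m Z q)@_top = 0.
Proof.
move=> w_eq; apply/eqP; apply: contraT => /mcoeff_gcoef_neq0 [mu mu_in le_mu].
have le_mu_deg : (m.+1 * gweight q + m * n <= mdeg mu)%N.
  have -> : (m * n = \sum_(i < n) m)%N by rewrite sum_nat_const card_ord mulnC.
  rewrite mdegE /gweight big_distrr /=.
  by rewrite -big_split; apply: leq_sum => i _; case: (le_mu i); rewrite mnmE.
rewrite w_eq addnC in le_mu_deg.
by move: (leq_trans (msize_mdeg_lt mu_in) Z_reduced.1); rewrite ltnNge le_mu_deg.
Qed.

Lemma meval_mderivm_gcoef (q : {ffun 'I_n -> 'I_B}) (c : {ffun 'I_n -> 'I_m.+1}) :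
  (forall q' : {ffun 'I_n -> 'I_B}, (gweight q' < gweight q)%N -> gcoef m Z q' = 0) ->
  (Z^`M[[multinom (q i : nat) | i < n]]).@[grid_pt c] =
    (\prod_i ((q i)`!%:R * g^`().[(c i : nat)%:R] ^+ q i)) * (gcoef m Z q).@[grid_pt c].
Proof.
move=> light_eq0; have g_root i : g.[grid_pt c i] = 0 by apply: root_grid_poly; rewrite -ltnS.
rewrite [X in X^`M[_]](grid_adic_mexpansion m (leqnn B)).
rewrite [in LHS]linear_sum [in LHS]linear_sum (bigD1 q) //= big1 ?addr0.
  have -> : gpow m q = pow_prod (fun=> g) (fun i => [multinom (q i : nat) | i < n] i).
    by apply: eq_pow_prod => i; rewrite mnmE.
  rewrite meval_mderivm_pow_prod_mul //; congr (_ * _).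
  by apply: eq_bigr => i _; rewrite mnmE.
move=> q' q'_neq; have [lt_q'|ge_q'] := ltnP (gweight q') (gweight q).
  by rewrite light_eq0 // mulr0 !linear0.
have [i qi_neq] : exists i, (q i : nat) != q' i.
  apply/existsP; apply: contraTT q'_neq => /existsPn eq_q; rewrite negbK.
  by apply/eqP/ffunP => i; apply/val_inj/eqP; rewrite eq_sym -[_ == _]negbK eq_q.
have [j lt_j] := exists_lt_of_sum_le ge_q' qi_neq.
by apply: meval_mderivm_pow_prod_mul_eq0 => //; exists j; rewrite mnmE.
Qed.

Lemma gcoef_light_eq0 w : (w < k)%N ->
  forall q : {ffun 'I_n -> 'I_B}, gweight q = w -> gcoef m Z q = 0.
Proof.
elim/ltn_ind: w => w IHw w_lt q w_eq; set R := gcoef m Z q.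
have boxed_R : boxed m R by move=> r /mcoeff_gcoef_neq0 [mu _ le_mu] i; case: (le_mu i).
pose nu := [multinom (q i : nat) | i < n].
have mdeg_nu : mdeg nu = w by rewrite mdegE -w_eq; apply: eq_bigr => i _; rewrite mnmE.
have R_eval (c : {ffun 'I_n -> 'I_m.+1}) : (Z^`M[nu]).@[grid_pt c] = 0 -> R.@[grid_pt c] = 0.
  have factor_neq0 : \prod_i ((q i)`!%:R * g^`().[(c i : nat)%:R] ^+ q i) != 0.
    apply/prodf_neq0 => i _; rewrite mulf_neq0 ?pnatr_eq0 -?lt0n ?fact_gt0 //.
    by apply: expf_neq0; apply: deriv_grid_poly_neq0; rewrite -ltnS.
  rewrite meval_mderivm_gcoef => [/eqP|q' lt_q']; last by apply: (IHw (gweight q')); lia.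
  by rewrite mulf_eq0 (negPf factor_neq0) => /eqP.
have Z_nu_eq0 (c : {ffun 'I_n -> 'I_m.+1}) :
    c != grid_origin \/ (w < k.-1)%N -> (Z^`M[nu]).@[grid_pt c] = 0.
  have [->|c_neq0] := eqVneq c grid_origin => [[//|w_lt']|_].
    rewrite (@meval_eq _ _ _ (fun=> 0)) => [|i]; last by rewrite /grid_pt ffunE.
    by apply: Z_vanish.2; rewrite mdeg_nu.
  have [i ci_gt0] := grid_origin_neq c_neq0.
  apply: (Z_vanish.1 (fun i => c i)); last by rewrite mdeg_nu.
    by move=> j; rewrite -ltnS.
  by exists i; apply/eqP; rewrite -lt0n.
have [w_lt'|w_ge] := ltnP w k.-1.
  by apply: (boxed_eq0 boxed_R) => c; apply: R_eval; apply: Z_nu_eq0; right.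
have R_eq := boxed_punctured_eq boxed_R (fun c c_neq0 => R_eval c (Z_nu_eq0 c (or_introl c_neq0))).
have w_eq' : gweight q = k.-1 by lia.
have := top_gcoef_eq0 w_eq'; rewrite -/R R_eq mcoeffZ mcoeff_pgrid_mpoly_top mulr1 => ->.
by rewrite scale0r.
Qed.

Lemma reduced_vanish_eq0 : Z = 0.
Proof.
rewrite (grid_adic_mexpansion m (leqnn B)) big1 // => q _.
have [w_lt|w_ge] := ltnP (gweight q) k; first by rewrite (gcoef_light_eq0 w_lt) ?mulr0.
by rewrite gcoef_heavy_eq0 // mulr0.
Qed.

End Uniqueness.

Theorem corollary3p4 (n m k : nat) (P : {mpoly RR[n]}) :
  (1 <= m)%N -> (1 <= n)%N -> (2 <= k)%N ->
  exists P0 : {mpoly RR[n]},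
    [/\ reduced m k P0, vanish_cond m k (P - P0),
        (forall Q : {mpoly RR[n]}, reduced m k Q -> vanish_cond m k (P - Q) -> Q = P0)
      & (msize P0 <= msize P)%N].
Proof.
move=> _ _ _; exists (reduce m k P); split.
- exact: reduce_reduced.
- exact: vanish_cond_sub_reduce.
- move=> Q Q_reduced Q_vanish; apply/eqP; rewrite -subr_eq0; apply/eqP.
  apply: reduced_vanish_eq0; first exact: reducedB (reduce_reduced m k P).
  have -> : Q - reduce m k P = (P - reduce m k P) - (P - Q) by ring.
  exact: vanish_condB (vanish_cond_sub_reduce m k P) Q_vanish.
- exact: msize_reduce.
Qed.
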